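(* Let $G$ be a $2$-connected cubic multigraph, let $H$ be a peninsula of $G$ with internal port $p$, let $C$ be a core of $H$, and let $e\neq p$ be an edge of $C$. Then for every endpoint $x$ of $p$ there exists a path in $C$ that starts at $x$, does not use $p$, and has $e$ as its last edge.
   Context: Multigraphs are finite and loopless, parallel edges allowed; paths in $C$ may use virtual edges of $C$. A cut of a multigraph $M$ is a bipartition $(U,V(M)\setminus U)$; its cut-set is the set of edges between the sides. A tombolo-cut is a cut whose cut-set (tombolo) has exactly $2$ edges. For a tombolo-cut of $G$ with tombolo $\{a_1b_1,a_2b_2\}$, $a_1,a_2\in U$, the pairs $\{a_1,a_2\}$, $\{b_1,b_2\}$ are its port-pairs. A virtual subgraph of $G$ (on vertex set $X\subseteq V(G)$) is the multigraph on $X$ whose edges are all edges of $G$ with both ends in $X$ (real edges) plus one (possibly parallel) virtual edge $ab$ for every port-pair $\{a,b\}\subseteq X$ of a tombolo of $G$ both of whose edges are not edges of $G$ inside $X$. A peninsula is a virtual subgraph $H$ such that $(V(H),V(G)\setminus V(H))$ is a tombolo-cut, or $H=G$. The internal port of a peninsula $H\ne G$ is its unique virtual edge; if $H=G$ an arbitrary edge is fixed as internal port. A core of a peninsula $H$ with internal port $p=xy$ is obtained as follows: set $C_1=H$; while $C_i$ has a cut $(U,V(C_i)\setminus U)$ whose cut-set (in $C_i$) has exactly $2$ edges, neither of which is $p$, let $C_{i+1}$ be the virtual subgraph of $G$ on $U$ if $\{x,y\}\subseteq U$, and on $V(C_i)\setminus U$ otherwise; when no such cut exists, the current $C_i$ is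 a core. *)

From mathcomp Require Import all_boot.
Set Implicit Arguments. Unset Strict Implicit. Unset Printing Implicit Defensive.

Section Multigraph.
Variables (V E : finType) (ends : E -> V * V).

Definition endsG (e : E) : {set V} := [set (ends e).1; (ends e).2].

Definition loopless : Prop := forall e : E, (ends e).1 != (ends e).2.

(* every vertex is incident with exactly 3 edges (G loopless, so degree) *)
Definition cubic : Prop := forall v : V, #|[set e : E | v \in endsG e]| = 3.

Definition adjIn (W : {set V}) : rel V :=
  fun u w => [&& u \in W, w \in W & [exists e : E, (u \in endsG e) && (w \in endsG e)]].

Definition connectedIn (W : {set V}) : Prop :=
  forall u w, u \in W -> w \in W -> connect (adjIn W) u w.

Definition two_connected : Prop :=
  1 < #|V| /\ connectedIn [set: V] /\ forall v : V, connectedIn [set~ v].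

Definition crosses (U A : {set V}) : bool := (A :&: U != set0) && (A :\: U != set0).

Definition cutsetG (U : {set V}) : {set E} := [set e : E | crosses U (endsG e)].

Definition tombolo_cut (U : {set V}) : bool := #|cutsetG U| == 2.

Definition portpair (S : {set E}) (P : {set V}) : bool :=
  [exists U : {set V},
     [&& cutsetG U == S, #|S| == 2 &
         P == [set v in U | [exists f in S, v \in endsG f]]]].

(* Universe of edges: real edges of G, and virtual edges indexed by
   (tombolo, port-pair). *)
Definition Edge := (E + ({set E} * {set V}))%type.

Definition endset (f : Edge) : {set V} :=
  match f with inl e => endsG e | inr SP => SP.2 end.

Definition is_virtual (f : Edge) : bool := if f is inr _ then true else false.

Definition vsub (X : {set V}) : {set Edge} :=
  [set f : Edge | match f with
                  | inl e => endsG e \subset X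
                  | inr SP => [&& portpair SP.1 SP.2, SP.2 \subset X &
                                  [forall g in SP.1, ~~ (endsG g \subset X)]]
                  end].

Definition cutsetIn (X U : {set V}) : {set Edge} :=
  [set f in vsub X | crosses U (endset f)].

(* peninsula: the virtual subgraph on X, where (X, V\X) is a tombolo-cut or X = V(G)
   (the virtual subgraph of G on V(G) is G itself) *)
Definition peninsula (X : {set V}) : bool := tombolo_cut X || (X == [set: V]).

Definition internal_port (X : {set V}) (p : Edge) : Prop :=
  if X == [set: V] then is_true (p \in vsub X)
  else [/\ p \in vsub X, is_virtual p &
           forall q, q \in vsub X -> is_virtual q -> q = p].

(* core_of p X Y : the virtual subgraph on Y is a core obtainable from the
   virtual subgraph on X by the reduction process w.r.t. internal port p *)
Inductive core_of (p : Edge) : {set V} -> {set V} -> Prop :=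
| core_stop (X : {set V}) :
    (forall U : {set V}, U \subset X -> #|cutsetIn X U| = 2 -> p \in cutsetIn X U) ->
    core_of p X X
| core_step (X U Y : {set V}) :
    U \subset X -> #|cutsetIn X U| = 2 -> p \notin cutsetIn X U ->
    core_of p (if endset p \subset U then U else X :\: U) Y ->
    core_of p X Y.

Definition is_path (Y : {set V}) (vs : seq V) (es : seq Edge) : Prop :=
  [/\ size vs = (size es).+1, uniq vs,
      all (fun f => f \in vsub Y) es &
      forall (v0 : V) (f0 : Edge) (i : nat), i < size es ->
        endset (nth f0 es i) = [set nth v0 vs i; nth v0 vs i.+1]].

End Multigraph.

From Pilot Require Import Defs.
From mathcomp Require Import all_boot.
Set Implicit Arguments. Unset Strict Implicit. Unset Printing Implicit Defensive.

(* The vertices of G outside a core C fall into pockets: vertex sets cut off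
   from G by a tombolo whose far ports lie in C, each seen from C as the
   virtual edge of that tombolo.  A peninsula has such a pocket structure, and
   every reduction step preserves it: the discarded side together with the
   pockets attached to it is a new pocket, cut off by the two edges of the
   step's cut.  Lifting a cut (Z, V(C) \ Z) of C to G by adding the pockets
   attached to Z does not increase its size, so, G being 2-connected and cubic,
   every cut of C has at least two edges.  Hence from x one reaches an end of e
   without using p or e, for otherwise p alone would separate the vertices so
   reached from the ends of e; a shortest such walk followed by e is the
   required path. *)

Lemma set2_eq_of_mem (T : finType) (a b c d : T) :
  a != b -> a \in [set c; d] -> b \in [set c; d] -> [set c; d] = [set a; b].
Proof.
move=> nab; rewrite !in_set2 => /orP[]/eqP Ea /orP[]/eqP Eb; subst a b;
  rewrite ?eqxx // in nab; exact: setUC.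
Qed.

Lemma belast_path_notin (T : finType) (r : rel T) (A : {set T}) (x : T) (s : seq T) :
  path (fun u v => (u \notin A) && r u v) x s -> {in belast x s, forall v, v \notin A}.
Proof.
elim: s x => [|y s IH] x //= /andP[/andP[xA _] ps] v.
by rewrite in_cons => /orP[/eqP->|]; last exact: IH.
Qed.

(** * Cuts of a 2-connected cubic multigraph *)

Section TwoConnectedCubic.
Variables (V E : finType) (ends : E -> V * V).
Hypothesis ends_loopless : loopless ends.
Hypothesis ends_cubic : cubic ends.
Hypothesis ends_2conn : two_connected ends.

Local Notation endsG := (endsG ends).
Local Notation cutsetG := (cutsetG ends).
Local Notation vsub := (vsub ends).
Local Notation endset := (endset ends).
Local Notation cutsetIn := (cutsetIn ends).
Local Notation Edge := (Edge V E).

Lemma crossesP (U A : {set V}) :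
  reflect ((exists2 v, v \in A & v \in U) /\ (exists2 v, v \in A & v \notin U))
          (crosses U A).
Proof.
rewrite /crosses; apply: (iffP andP) =>
  [[/set0Pn[v /setIP[? ?]] /set0Pn[w /setDP[? ?]]]|[[v ? ?] [w ? ?]]]; split.
- by exists v.
- by exists w.
- by apply/set0Pn; exists v; apply/setIP.
- by apply/set0Pn; exists w; apply/setDP.
Qed.

Lemma crosses_set2 (U : {set V}) (u w : V) :
  crosses U [set u; w] = ((u \in U) != (w \in U)).
Proof.
apply/crossesP/idP => [[[v /set2P[]-> vU] [v' /set2P[]-> v'U]]|].
- by rewrite vU in v'U.
- by rewrite vU (negbTE v'U).
- by rewrite vU (negbTE v'U).
- by rewrite vU in v'U.
by case: (boolP (u \in U)) => uU; case: (boolP (w \in U)) => wU // _;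
  split; [exists u | exists w | exists w | exists u]; rewrite ?set21 ?set22.
Qed.

Lemma crosses2 (U : {set V}) (u w : V) : u \in U -> w \notin U -> crosses U [set u; w].
Proof. by move=> uU wU; rewrite crosses_set2 uU (negbTE wU). Qed.

Lemma cutsetG_ends (U : {set V}) (g : E) : g \in cutsetG U ->
  exists u w, [/\ u \in U, w \notin U & endsG g = [set u; w]].
Proof.
rewrite inE => /crossesP[[u uA uU] [w wA wU]]; exists u, w; split => //.
have nuw : u != w by apply: contraNneq wU => <-.
exact: set2_eq_of_mem nuw uA wA.
Qed.

Lemma cutsetGC (U : {set V}) : cutsetG (~: U) = cutsetG U.
Proof. by apply/setP => g; rewrite !inE /crosses setDE setCK -setDE andbC. Qed.

Lemma endsG_other (g : E) (a : V) : a \in endsG g ->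
  exists2 v, v != a & endsG g = [set a; v].
Proof.
have := ends_loopless g; rewrite /Defs.endsG in_set2 => ne /orP[]/eqP->.
  by exists (ends g).2; rewrite // eq_sym.
by exists (ends g).1; rewrite // setUC.
Qed.

Lemma connect_cutsetG (W Z : {set V}) (u w : V) :
  connect (adjIn ends W) u w -> u \in Z -> w \notin Z ->
  exists2 g, g \in cutsetG Z & endsG g \subset W.
Proof.
move/connectP=> [s + ->]; elim: s u => [|y s IH] u /=; first by move=> _ ->.
move=> /andP[/and3P[uW yW /existsP[g /andP[ug yg]]] ys] uZ wZ.
case yZ: (y \in Z); first exact: IH ys yZ wZ.
have nuy : u != y by apply: contraTneq uZ => ->; rewrite yZ.
have Eg : endsG g = [set u; y] := set2_eq_of_mem nuy ug yg.
exists g; first by rewrite inE Eg crosses2 ?yZ.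
by rewrite Eg; apply/subsetP => v /set2P[]->.
Qed.

(* Either Z = {a} and cubicity gives three cut edges, or G - a joins Z \ a to
   b and so provides a cut edge avoiding a. *)
Lemma cutsetG_star_gt2 (Z : {set V}) (a b : V) : a \in Z -> b \notin Z ->
  {in cutsetG Z, forall g, a \in endsG g} -> 2 < #|cutsetG Z|.
Proof.
move=> aZ bZ cut_a; case: (set_0Vmem (Z :\ a)) => [Za | [w /setD1P[wa wZ]]].
  have -> : Z = [set a].
    by apply/eqP; rewrite eqEsubset sub1set aZ andbT -setD_eq0 Za.
  rewrite -(ends_cubic a); apply/subset_leq_card/subsetP => g.
  by rewrite in_set => /endsG_other[v va Eg]; rewrite inE Eg crosses2 ?inE.
have [_ [_ conn_minus]] := ends_2conn.
have wa' : w \in [set~ a] by rewrite !inE.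
have ba' : b \in [set~ a] by rewrite !inE; apply: contraNneq bZ => ->.
have [g gZ gW] := connect_cutsetG (conn_minus a w b wa' ba') wZ bZ.
by have := subsetP gW a (cut_a g gZ); rewrite !inE eqxx.
Qed.

Lemma cutsetG_gt1 (Z : {set V}) (z b : V) : z \in Z -> b \notin Z -> 1 < #|cutsetG Z|.
Proof.
move=> zZ bZ; have [_ [conn _]] := ends_2conn.
have [g gZ _] := connect_cutsetG (conn z b (in_setT _) (in_setT _)) zZ bZ.
rewrite ltnNge; apply/negP => cut_le1.
have cutg : cutsetG Z = [set g].
  by apply/eqP; rewrite eq_sym eqEcard sub1set gZ cards1.
have [a [w [aZ _ ga]]] := cutsetG_ends gZ.
suff : 2 < #|cutsetG Z| by rewrite cutg cards1.
by apply: (cutsetG_star_gt2 aZ bZ) => g'; rewrite cutg inE => /eqP->; rewrite ga set21.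
Qed.

Definition ports (U : {set V}) : {set V} :=
  [set v in ~: U | [exists f in cutsetG U, v \in endsG f]].

Lemma portsP (U : {set V}) (v : V) :
  reflect (v \notin U /\ exists2 g, g \in cutsetG U & v \in endsG g) (v \in ports U).
Proof.
rewrite /ports in_set in_setC; apply: (iffP andP) => -[vU].
  by case/existsP=> g /andP[gU vg]; split => //; exists g.
by case=> g gU vg; split => //; apply/existsP; exists g; rewrite gU.
Qed.

Lemma cut_edge_ports (U : {set V}) (g : E) (u w : V) :
  endsG g = [set u; w] -> u \in U -> w \notin U -> g \in cutsetG U /\ w \in ports U.
Proof.
move=> Eg uU wU; have gU : g \in cutsetG U by rewrite inE Eg crosses2.
by split => //; apply/portsP; split => //; exists g; rewrite // Eg set22.
Qed.

Lemma ports_tombolo (U : {set V}) : #|cutsetG U| = 2 ->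
  exists a b, a != b /\ ports U = [set a; b].
Proof.
move=> U2; have /eqP/cards2P[s1 [s2 [_ cutU]]] := U2.
have s1U : s1 \in cutsetG U by rewrite cutU set21.
have s2U : s2 \in cutsetG U by rewrite cutU set22.
have [u1 [w1 [u1U w1U E1]]] := cutsetG_ends s1U.
have [u2 [w2 [u2U w2U E2]]] := cutsetG_ends s2U.
have portsU : ports U = [set w1; w2].
  apply/setP => v; apply/portsP/set2P => [[vU [g]] | [->|->]].
  - rewrite cutU => /set2P[]->; rewrite ?E1 ?E2 => /set2P[] Ev; subst v; auto;
      by rewrite ?u1U ?u2U in vU.
  - by split => //; exists s1; rewrite // E1 set22.
  - by split => //; exists s2; rewrite // E2 set22.
exists w1, w2; split => //; apply/negP => /eqP w12.
suff : 2 < #|cutsetG (~: U)| by rewrite cutsetGC U2.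
apply: (@cutsetG_star_gt2 _ w1 u1); rewrite ?inE ?w1U ?u1U // cutsetGC cutU.
by move=> g /set2P[]->; rewrite ?E1 ?E2 -?w12 set22.
Qed.

Lemma vsub_endset (Y : {set V}) (f : Edge) : f \in vsub Y -> endset f \subset Y.
Proof. by rewrite inE; case: f => [g|[S P]] //= /and3P[]. Qed.

Lemma vsub_restrict (W X : {set V}) (f : Edge) :
  W \subset X -> f \in vsub X -> endset f \subset W -> f \in vsub W.
Proof.
case: f => [g|[S P]]; rewrite !inE /= => sWX; first by move=> _ ->.
case/and3P=> ->_ /forallP outX -> /=; apply/forallP => g; apply/implyP => gS.
by move: (outX g); rewrite gS; apply: contra => /subset_trans; apply.
Qed.

Lemma vsub_endset2 (Y : {set V}) (f : Edge) : f \in vsub Y ->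
  exists a b, a != b /\ endset f = [set a; b].
Proof.
case: f => [g _ | [S P]] /=.
  by exists (ends g).1, (ends g).2; split; first exact: ends_loopless.
rewrite inE /= => /and3P[/existsP[U /and3P[/eqP cutU /eqP S2 /eqP ->]] _ _].
have -> : [set v in U | [exists f in S, v \in endsG f]] = ports (~: U).
  by rewrite /ports setCK cutsetGC cutU.
by apply: ports_tombolo; rewrite cutsetGC cutU.
Qed.

(** * Pockets *)

Definition pocket_edge (Q : {set V}) : Edge := inr (cutsetG Q, ports Q).

(* F partitions the vertices outside Y into the pieces discarded on the way
   to the virtual subgraph on Y; pocket Q appears there as [pocket_edge Q]. *)
Record pockets (Y : {set V}) (F : {set {set V}}) : Prop := Pockets {
  pocket_out : forall Q, Q \in F -> Q \subset ~: Y;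
  pocket_eq : forall Q Q' v, Q \in F -> Q' \in F -> v \in Q -> v \in Q' -> Q = Q';
  pocket_cover : forall v, v \notin Y -> exists2 Q, Q \in F & v \in Q;
  pocket_tombolo : forall Q, Q \in F -> tombolo_cut ends Q;
  pocket_ports : forall Q, Q \in F -> ports Q \subset Y }.

(* Undoes the reduction on a set Z of vertices of Y: the pockets attached to Z
   are added to it. *)
Definition lift (F : {set {set V}}) (Z : {set V}) : {set V} :=
  [set v | (v \in Z) || [exists Q in F, (v \in Q) && (ports Q :&: Z != set0)]].

Lemma peninsula_pockets (X : {set V}) : peninsula ends X -> exists F, pockets X F.
Proof.
case/orP=> [tombX | /eqP->].
  exists [set ~: X]; split=> [Q | Q Q' v | v vX | Q | Q]; rewrite ?inE.
  - by move/eqP->.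
  - by move=> /eqP-> /eqP->.
  - by exists (~: X); rewrite ?inE.
  - by move/eqP->; rewrite /tombolo_cut cutsetGC.
  - by move/eqP->; apply/subsetP => v /portsP[]; rewrite inE negbK.
by exists set0; split=> [Q | Q Q' v | v | Q | Q]; rewrite ?inE.
Qed.

Section Lift.
Variables (Y : {set V}) (F : {set {set V}}).
Hypothesis pocketsF : pockets Y F.

Lemma pocket_notin (Q : {set V}) (v : V) : Q \in F -> v \in Y -> v \notin Q.
Proof.
by move=> QF vY; apply: contraL vY => /(subsetP (pocket_out pocketsF QF)); rewrite inE.
Qed.

Lemma lift_in {Z : {set V}} (v : V) : v \in Y -> (v \in lift F Z) = (v \in Z).
Proof.
move=> vY; rewrite inE orbC; case: existsP => // -[Q /and3P[QF vQ _]].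
by rewrite (negbTE (pocket_notin QF vY)) in vQ.
Qed.

Lemma lift_pocket (Z Q : {set V}) (v : V) : Z \subset Y -> Q \in F -> v \in Q ->
  (v \in lift F Z) = (ports Q :&: Z != set0).
Proof.
move=> sZY QF vQ; have vY : v \notin Y.
  by apply: contraL vQ; exact: pocket_notin.
rewrite inE (contraNF (subsetP sZY v) vY) /=.
apply/existsP/idP => [[Q' /and3P[Q'F vQ' PZ]] | PZ]; last by exists Q; rewrite QF vQ.
by rewrite (pocket_eq pocketsF QF Q'F vQ vQ').
Qed.

Lemma pocket_edge_vsub (Q : {set V}) : Q \in F -> pocket_edge Q \in vsub Y.
Proof.
move=> QF; rewrite inE /=; apply/and3P; split; last 2 first.
- exact: (pocket_ports pocketsF QF).
- apply/forallP => g; apply/implyP => /cutsetG_ends[u [w [uQ _ ->]]].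
  apply: contraL uQ => /subsetP/(_ u (set21 _ _)); exact: pocket_notin.
apply/existsP; exists (~: Q); rewrite cutsetGC eqxx.
by have := pocket_tombolo pocketsF QF; rewrite /tombolo_cut => -> /=.
Qed.

Lemma pocket_cut_ends (Q : {set V}) (g : E) : Q \in F -> g \in cutsetG Q ->
  exists u w, [/\ u \in Q, w \in ports Q & endsG g = [set u; w]].
Proof.
move=> QF /cutsetG_ends[u [w [uQ wQ Eg]]]; exists u, w; split => //.
by case: (cut_edge_ports Eg uQ wQ).
Qed.

Lemma pocket_cut_uniq (Q Q' : {set V}) (g : E) : Q \in F -> Q' \in F ->
  g \in cutsetG Q -> g \in cutsetG Q' -> Q = Q'.
Proof.
move=> QF Q'F /(pocket_cut_ends QF)[u [w [uQ wP Eg]]].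
have wY := subsetP (pocket_ports pocketsF QF) w wP.
rewrite inE Eg crosses_set2 (negbTE (pocket_notin Q'F wY)).
by case: (boolP (u \in Q')) => // uQ' _; exact: (pocket_eq pocketsF QF Q'F uQ uQ').
Qed.

Lemma pocket_cut_lift (Z Q : {set V}) (g : E) : Z \subset Y -> Q \in F ->
  g \in cutsetG Q -> g \in cutsetG (lift F Z) ->
  ports Q :&: Z != set0 /\ {in endsG g, forall w, w \notin Q -> w \notin Z}.
Proof.
move=> sZY QF /(pocket_cut_ends QF)[u [w [uQ wP Eg]]].
have wY := subsetP (pocket_ports pocketsF QF) w wP.
have wQ : w \notin Q by case/portsP: wP.
rewrite inE Eg crosses_set2 (lift_pocket sZY QF uQ) (lift_in wY).
have [wZ | wZ] := boolP (w \in Z).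
  have PZ : ports Q :&: Z != set0 by apply/set0Pn; exists w; rewrite inE wP.
  by rewrite PZ.
case: (ports Q :&: Z != set0) => // _.
by split => // v /set2P[]->; rewrite ?uQ.
Qed.

Lemma pocket_edge_cutsetIn (Z Q : {set V}) (g : E) : Z \subset Y -> Q \in F ->
  g \in cutsetG Q -> g \in cutsetG (lift F Z) -> pocket_edge Q \in cutsetIn Y Z.
Proof.
move=> sZY QF gQ gZ; have [PZ outZ] := pocket_cut_lift sZY QF gQ gZ.
have [u [w [uQ wP Eg]]] := pocket_cut_ends QF gQ.
rewrite inE pocket_edge_vsub //; apply/crossesP; split.
  by case/set0Pn: PZ => v /setIP[vP vZ]; exists v.
exists w => //; apply: outZ; first by rewrite Eg set22.
by case/portsP: wP.
Qed.

Lemma lift_cut_real (Z : {set V}) (g : E) : Z \subset Y ->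
  g \in cutsetG (lift F Z) -> (forall Q, Q \in F -> g \notin cutsetG Q) ->
  inl g \in cutsetIn Y Z.
Proof.
move=> sZY gZ uncut; have [u [w [uZ wZ Eg]]] := cutsetG_ends gZ.
have gY : endsG g \subset Y.
  apply/subsetP => v vg; apply: contraT => vY.
  have [Q QF vQ] := pocket_cover pocketsF vY.
  have : ~~ crosses Q (endsG g) by have := uncut Q QF; rewrite inE.
  rewrite Eg crosses_set2 negbK => /eqP uwQ.
  have [uQ wQ] : u \in Q /\ w \in Q.
    by move: vg; rewrite Eg => /set2P[] Ev; subst v; [rewrite -uwQ | rewrite uwQ].
  by move: wZ; rewrite (lift_pocket sZY QF wQ) -(lift_pocket sZY QF uQ) uZ.
have [uY wY] : u \in Y /\ w \in Y.
  by rewrite !(subsetP gY) // Eg ?set21 ?set22.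
rewrite (lift_in uY) in uZ; rewrite (lift_in wY) in wZ.
by rewrite in_set [inl g \in _]in_set /= gY Eg crosses2.
Qed.

Lemma lift_cut_pocket_uniq (Z Q : {set V}) (g1 g2 : E) : Z \subset Y -> Q \in F ->
  g1 \in cutsetG Q -> g1 \in cutsetG (lift F Z) ->
  g2 \in cutsetG Q -> g2 \in cutsetG (lift F Z) -> g1 = g2.
Proof.
move=> sZY QF g1Q g1Z g2Q g2Z; apply/eqP; apply: contraT => g12.
have cutQ : cutsetG Q = [set g1; g2].
  apply/eqP; rewrite eq_sym eqEcard subUset !sub1set g1Q g2Q.
  by rewrite (eqP (pocket_tombolo pocketsF QF)) cards2 g12.
have [/set0Pn[z /setIP[/portsP[zQ [f fQ zf]] zZ]] _] := pocket_cut_lift sZY QF g1Q g1Z.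
move: fQ zf; rewrite cutQ => /set2P[]-> zg.
  by have [_ /(_ z zg zQ)] := pocket_cut_lift sZY QF g1Q g1Z; rewrite zZ.
by have [_ /(_ z zg zQ)] := pocket_cut_lift sZY QF g2Q g2Z; rewrite zZ.
Qed.

Lemma lift_card (Z : {set V}) : Z \subset Y -> #|cutsetG (lift F Z)| <= #|cutsetIn Y Z|.
Proof.
move=> sZY.
(* A cut edge entering a pocket is charged to the pocket's virtual edge; two
   such edges for one pocket would exhaust its tombolo and detach it from Z. *)
pose phi g := if [pick Q in F | g \in cutsetG Q] is Some Q then pocket_edge Q else inl g.
have phi_cut : {in cutsetG (lift F Z), forall g, phi g \in cutsetIn Y Z}.
  move=> g gZ; rewrite /phi; case: pickP => [Q /andP[QF gQ] | uncut].
    exact: pocket_edge_cutsetIn sZY QF gQ gZ.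
  by apply: lift_cut_real sZY gZ _ => Q QF; move: (uncut Q); rewrite QF => /negbT.
have phi_inj : {in cutsetG (lift F Z) &, injective phi}.
  move=> g1 g2 g1Z g2Z; rewrite /phi.
  case: pickP => [Q1 /andP[Q1F g1Q1] | _];
    case: pickP => [Q2 /andP[Q2F g2Q2] | _] //; last by case.
  case=> cutQ12 _; have g1Q2 : g1 \in cutsetG Q2 by rewrite -cutQ12.
  have eQ12 := pocket_cut_uniq Q1F Q2F g1Q1 g1Q2; subst Q2.
  exact: lift_cut_pocket_uniq sZY Q1F g1Q1 g1Z g2Q2 g2Z.
rewrite -(card_in_imset phi_inj); apply/subset_leq_card/subsetP => _ /imsetP[g gZ ->].
exact: phi_cut.
Qed.

Lemma lift_ports (Z : {set V}) : Z \subset Y -> ports (lift F Z) \subset Y :\: Z.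
Proof.
move=> sZY; apply/subsetP => v /portsP[vZ [g gZ vg]].
have [u [w [uZ wZ Eg]]] := cutsetG_ends gZ.
have vw : v = w by move: vg; rewrite Eg => /set2P[Ev|//]; rewrite Ev uZ in vZ.
subst v; suff wY : w \in Y by rewrite inE wY andbT -(lift_in wY).
apply: contraT => wY; have [Q QF wQ] := pocket_cover pocketsF wY.
have [uQ | uQ] := boolP (u \in Q).
  by move: vZ; rewrite (lift_pocket sZY QF wQ) -(lift_pocket sZY QF uQ) uZ.
have [_ uP] := cut_edge_ports (etrans Eg (setUC _ _)) wQ uQ.
have uY := subsetP (pocket_ports pocketsF QF) u uP.
move: vZ; rewrite (lift_pocket sZY QF wQ) negbK => /eqP/setP/(_ u).
by rewrite in_setI in_set0 uP -(lift_in uY) uZ.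
Qed.

Lemma cutsetIn_gt1 (Z : {set V}) (z b : V) : Z \subset Y ->
  z \in Z -> b \in Y -> b \notin Z -> 1 < #|cutsetIn Y Z|.
Proof.
move=> sZY zZ bY bZ; apply: leq_trans (lift_card sZY).
have zL : z \in lift F Z by rewrite inE zZ.
have bL : b \notin lift F Z by rewrite lift_in.
exact: cutsetG_gt1 zL bL.
Qed.

(* Discarding O creates one new pocket, O with the pockets attached to it, cut
   off by the lift of the two edges leaving O. *)
Lemma pockets_setD (O : {set V}) : O \subset Y -> #|cutsetIn Y O| = 2 ->
  pockets (Y :\: O) (lift F O |: [set Q in F | ports Q :&: O == set0]).
Proof.
move=> sOY cutO; have OL : O \subset lift F O by apply/subsetP => v vO; rewrite inE vO.
have outL Q v : Q \in F -> ports Q :&: O == set0 -> v \in Q -> v \notin lift F O.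
  by move=> QF PQ vQ; rewrite (lift_pocket sOY QF vQ) PQ.
split.
- move=> Q /setU1P[->|/setIdP[QF _]].
    apply/subsetP => v vL; rewrite !inE negb_and negbK.
    by case: (boolP (v \in Y)) => vY; rewrite ?orbT // -(lift_in vY) vL.
  by apply: subset_trans (pocket_out pocketsF QF) _; rewrite setCS subsetDl.
- move=> Q Q' v /setU1P[->|/setIdP[QF PQ]] /setU1P[->|/setIdP[Q'F PQ']] // vQ vQ'.
  + by rewrite (negbTE (outL _ _ Q'F PQ' vQ')) in vQ.
  + by rewrite (negbTE (outL _ _ QF PQ vQ)) in vQ'.
  + exact: (pocket_eq pocketsF QF Q'F vQ vQ').
- move=> v; rewrite inE negb_and negbK => /orP[vO | vY].
    by exists (lift F O); rewrite ?setU11 ?(subsetP OL).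
  have [Q QF vQ] := pocket_cover pocketsF vY.
  have [PQ | PQ] := boolP (ports Q :&: O == set0).
    by exists Q; rewrite // !inE QF PQ orbT.
  by exists (lift F O); rewrite ?setU11 // (lift_pocket sOY QF vQ).
- move=> Q /setU1P[->|/setIdP[QF _]]; last exact: (pocket_tombolo pocketsF QF).
  have /card_gt0P[f] : 0 < #|cutsetIn Y O| by rewrite cutO.
  rewrite inE => /andP[fY /crossesP[[o fo oO] [b fb bO]]].
  have bY := subsetP (vsub_endset fY) b fb.
  have bL : b \notin lift F O by rewrite lift_in.
  rewrite /tombolo_cut eqn_leq -{1}cutO lift_card //=.
  exact: cutsetG_gt1 (subsetP OL o oO) bL.
- move=> Q /setU1P[->|/setIdP[QF PQ]]; first exact: lift_ports.
  apply/subsetP => v vP; rewrite inE (subsetP (pocket_ports pocketsF QF) v vP) andbT.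
  by apply: contraL PQ => vO; apply/set0Pn; exists v; rewrite inE vP.
Qed.

End Lift.

Lemma crosses_setD (X U A : {set V}) : A \subset X -> crosses (X :\: U) A = crosses U A.
Proof.
move=> sAX; apply/crossesP/crossesP => -[[v vA vXU] [w wA wXU]]; split.
- by exists w; rewrite // inE (subsetP sAX w wA) andbT negbK in wXU.
- by exists v; rewrite // inE in vXU; case/andP: vXU.
- by exists w; rewrite // inE wXU (subsetP sAX w wA).
- by exists v; rewrite // inE vXU.
Qed.

Lemma cutsetIn_setD (X U : {set V}) : cutsetIn X (X :\: U) = cutsetIn X U.
Proof.
apply/setP => f; rewrite [in LHS]in_set [in RHS]in_set.
by case fX: (f \in vsub X); rewrite //= crosses_setD // vsub_endset.
Qed.

Lemma pockets_sub (X U : {set V}) (F : {set {set V}}) :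
  pockets X F -> U \subset X -> #|cutsetIn X U| = 2 -> exists F', pockets U F'.
Proof.
move=> pkF sUX cutU; have := pockets_setD pkF (subsetDl X U).
rewrite cutsetIn_setD setDDr setDv set0U (setIidPr sUX) => /(_ cutU) pkU.
by eexists; exact: pkU.
Qed.

Lemma core_step_port (p : Edge) (X U : {set V}) : U \subset X -> p \in vsub X ->
  p \notin cutsetIn X U -> p \in vsub (if endset p \subset U then U else X :\: U).
Proof.
move=> sUX pX npU; case: ifPn => [pU | /subsetPn[w wp wU]].
  exact: vsub_restrict sUX pX pU.
apply: (vsub_restrict (subsetDl X U) pX); apply/subsetP => v vp.
rewrite inE (subsetP (vsub_endset pX) v vp) andbT; apply: contra npU => vU.
by rewrite inE pX; apply/crossesP; split; [exists v | exists w].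
Qed.

Lemma core_vsub_port (p : Edge) (X Y : {set V}) :
  core_of ends p X Y -> p \in vsub X -> p \in vsub Y.
Proof. by elim=> // X0 U Y0 sUX _ npU _ IH pX; apply/IH/core_step_port. Qed.

Lemma core_pockets (p : Edge) (X Y : {set V}) (F : {set {set V}}) :
  core_of ends p X Y -> p \in vsub X -> pockets X F -> exists F', pockets Y F'.
Proof.
move=> core; elim: core F => [X0 _ | X0 U Y0 sUX cutU npU _ IH] F pX pkF.
  by exists F.
have [F' pkF'] : exists F', pockets (if endset p \subset U then U else X0 :\: U) F'.
  case: ifP => _; first exact: pockets_sub pkF sUX cutU.
  by eexists; exact: (pockets_setD pkF sUX cutU).
exact: IH F' (core_step_port sUX pX npU) pkF'.
Qed.

(** * Paths in the core *)

Definition linked (good : pred Edge) : rel V :=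
  fun u v => [exists f, good f && (endset f == [set u; v])].

Lemma is_path1 (Y : {set V}) (f : Edge) (u w : V) :
  f \in vsub Y -> u != w -> endset f = [set u; w] -> is_path ends Y [:: u; w] [:: f].
Proof.
move=> fY uw Ef; split; rewrite /= ?mem_seq1 ?fY ?andbT //.
by move=> v0 f0 [|i].
Qed.

Lemma is_path_cons (Y : {set V}) (v : V) (vs : seq V) (f : Edge) (es : seq Edge) :
  is_path ends Y vs es -> v \notin vs -> f \in vsub Y -> endset f = [set v; head v vs] ->
  is_path ends Y (v :: vs) (f :: es).
Proof.
case: vs => [[]//|y vs] [sz uq all_es nth_es] vn fY Ef.
split=> [/=|/=|/=|v0 f0 [|i] /= lti]; rewrite -?sz ?vn ?fY //.
exact: (nth_es v0 f0 i lti).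
Qed.

Lemma linked_path (Y : {set V}) (good : pred Edge) (x w : V) (s : seq V) (e : Edge) :
  {subset good <= vsub Y} -> path (linked good) x s -> uniq (rcons (x :: s) w) ->
  e \in vsub Y -> endset e = [set last x s; w] ->
  exists2 es, is_path ends Y (rcons (x :: s) w) (rcons es e) & all good es.
Proof.
move=> goodY; elim: s x => [|y s IH] x /=.
  by move=> _; rewrite inE andbT => xw eY Ee; exists [::]; first exact: is_path1.
case/andP=> /existsP[f /andP[gf /eqP Ef]] ys /andP[xn us] eY Ee.
have [es pth ges] := IH y ys us eY Ee.
by exists (f :: es); [apply: is_path_cons pth xn (goodY f gf) Ef | rewrite /= gf].
Qed.

Definition avoiding (Y : {set V}) (p e : Edge) : pred Edge :=
  [pred f | [&& f \in vsub Y, f != p & f != e]].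

Definition reach_step (Y : {set V}) (p e : Edge) : rel V :=
  fun u v => (u \notin endset e) && linked (avoiding Y p e) u v.

Lemma reach_edge_end (Y : {set V}) (F : {set {set V}}) (p e : Edge) (x : V) :
  pockets Y F -> x \in Y -> e \in vsub Y ->
  exists2 t, t \in endset e & connect (reach_step Y p e) x t.
Proof.
move=> pkF xY eY; set step := reach_step Y p e.
have [/exists_inP[t te xt] | none] := boolP [exists t in endset e, connect step x t].
  by exists t.
pose Z := [set v in Y | connect step x v]; exfalso.
have sZY : Z \subset Y by apply/subsetP => v /setIdP[].
have xZ : x \in Z by rewrite inE xY connect0.
have [a [b [_ Ee]]] := vsub_endset2 eY.
have aY : a \in Y by rewrite (subsetP (vsub_endset eY)) // Ee set21.
have aZ : a \notin Z.
  apply: contraNN none => /setIdP[_ xa].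
  by apply/exists_inP; exists a; rewrite ?Ee ?set21.
(* Otherwise only p could leave the part of Y reachable from x. *)
suff : #|cutsetIn Y Z| <= 1 by rewrite leqNgt (cutsetIn_gt1 pkF sZY xZ aY aZ).
rewrite -(cards1 p); apply/subset_leq_card/subsetP => f.
rewrite inE => /andP[fY /crossesP[[c fc cZ] [d fd dZ]]].
have /setIdP[_ xc] := cZ.
rewrite inE; apply: contraT => nfp.
have ce : c \notin endset e.
  by apply: contraNN none => ce; apply/exists_inP; exists c.
have nfe : f != e by apply: contraNneq ce => <-.
have [a' [b' [_ Ef]]] := vsub_endset2 fY.
have ncd : c != d by apply: contraNneq dZ => <-.
have Ecd : endset f = [set c; d] by rewrite Ef (set2_eq_of_mem ncd) -?Ef.
have cd : step c d.
  rewrite /step /reach_step ce; apply/existsP; exists f.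
  by rewrite /avoiding /= fY nfp nfe Ecd eqxx.
by rewrite inE (subsetP (vsub_endset fY)) // (connect_trans xc (connect1 cd)) in dZ.
Qed.

Lemma path_to_edge (Y : {set V}) (F : {set {set V}}) (p e : Edge) (x : V) :
  pockets Y F -> x \in Y -> e \in vsub Y -> e != p ->
  exists (vs : seq V) (es : seq Edge),
    [/\ is_path ends Y vs es, head x vs = x, p \notin es, es != [::] & last e es = e].
Proof.
move=> pkF xY eY nep; have [t te] := reach_edge_end p pkF xY eY.
case/connectP=> s0 /shortenP[s st us _] tl.
have [w tw Eew] : exists2 w, t != w & endset e = [set t; w].
  have [a [b [nab Ee]]] := vsub_endset2 eY.
  by move: te; rewrite Ee => /set2P[]->; [exists b | exists a; rewrite 1?eq_sym // setUC].
have wn : w \notin x :: s.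
  rewrite lastI -tl mem_rcons inE eq_sym (negbTE tw) /=.
  by apply/negP => /(belast_path_notin st); rewrite Eew set22.
have avoidY : {subset avoiding Y p e <= vsub Y} by move=> f /and3P[].
have st' : path (linked (avoiding Y p e)) x s by apply: sub_path st => u v /andP[].
have uqs : uniq (rcons (x :: s) w) by rewrite rcons_uniq wn us.
have Eel : endset e = [set last x s; w] by rewrite -tl.
have [es pth aves] := linked_path avoidY st' uqs eY Eel.
exists (rcons (x :: s) w), (rcons es e); split => //.
- rewrite mem_rcons inE eq_sym (negbTE nep) /=.
  by apply/negP => /(allP aves); rewrite /avoiding /= eqxx andbF.
- by rewrite -size_eq0 size_rcons.
- exact: last_rcons.
Qed.

End TwoConnectedCubic.

Theorem lemma20 (V E : finType) (ends : E -> V * V) (X Y : {set V})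
    (p e : Edge V E) (x : V) :
  loopless ends -> cubic ends -> two_connected ends ->
  peninsula ends X -> internal_port ends X p ->
  core_of ends p X Y ->
  e \in vsub ends Y -> e != p ->
  x \in endset ends p ->
  exists (vs : seq V) (es : seq (Edge V E)),
    [/\ is_path ends Y vs es, head x vs = x, p \notin es,
        es != [::] & last e es = e].
Proof.
move=> loopless cubic conn pen port core eY nep xp.
have pX : p \in vsub ends X by move: port; rewrite /internal_port; case: ifP => _ // [].
have [F pkF] := peninsula_pockets pen.
have [F' pkF'] := core_pockets loopless cubic conn core pX pkF.
have xY := subsetP (vsub_endset (core_vsub_port core pX)) x xp.
exact: (path_to_edge loopless cubic conn pkF' xY eY nep).
Qed.
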